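(* Let $A,B\in\mathcal{H}$ and $f\in\mathscr{C}(A,B)$. If a distinguished triangle $A\overset{f}{\to}B\overset{g}{\to}C\to A[1]$ has the property that $g$ factors as $g=c\circ b$ with $b\colon B\to U$, $c\colon U\to C$ for some $U\in\mathcal{U}$, then $\underline{f}\in\underline{\mathcal{H}}(A,B)$ is an epimorphism in $\underline{\mathcal{H}}$.
   Context: $\mathscr{C}$ is a triangulated category with shift $[1]$; subcategories are full, additive, closed under isomorphisms and direct summands. $\mathrm{Ext}^1(X,Y)=\mathscr{C}(X,Y[1])$. $\mathcal{M}\ast\mathcal{N}$ is the full subcategory of objects $C$ admitting a distinguished triangle $M\to C\to N\to M[1]$ with $M\in\mathcal{M}$, $N\in\mathcal{N}$. A cotorsion pair $(\mathcal{U},\mathcal{V})$: $\mathrm{Ext}^1(\mathcal{U},\mathcal{V})=0$ and $\mathscr{C}=\mathcal{U}\ast\mathcal{V}[1]$. Fix a twin cotorsion pair, i.e. cotorsion pairs $(\mathcal{S},\mathcal{T}),(\mathcal{U},\mathcal{V})$ with $\mathrm{Ext}^1(\mathcal{S},\mathcal{V})=0$. Put $\mathcal{W}=\mathcal{T}\cap\mathcal{U}$, $\mathscr{C}^-=\mathcal{S}[-1]\ast\mathcal{W}$, $\mathscr{C}^+=\mathcal{W}\ast\mathcal{V}[1]$, $\mathcal{H}=\mathscr{C}^+\cap\mathscr{C}^-$. $\underline{\mathcal{H}}$ is the ideal quotient of $\mathcal{H}$ by morphisms factoring through objects of $\mathcal{W}$, and $\underline{f}$ is the image of $f$. *)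

From HB Require Import structures.
From mathcomp Require Import all_boot all_order all_algebra.
Set Implicit Arguments. Unset Strict Implicit. Unset Printing Implicit Defensive.
Import GRing.Theory.
Local Open Scope ring_scope.

Record cat_data := CatData {
  Obj : Type;
  Mor : Obj -> Obj -> zmodType;
  idm : forall X, Mor X X;
  mcomp : forall X Y Z, Mor Y Z -> Mor X Y -> Mor X Z;   (* mcomp g f = g o f *)
  sh : Obj -> Obj;
  shm : forall X Y, Mor X Y -> Mor (sh X) (sh Y);
  dist : forall X Y Z, Mor X Y -> Mor Y Z -> Mor Z (sh X) -> Prop
}.
Arguments idm {c} X.
Arguments mcomp {c X Y Z} g f.
Arguments sh {c} X.
Arguments shm {c X Y} f.
Arguments dist {c X Y Z} f g h.

Section Basic.
Variable C : cat_data.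
Implicit Types X Y Z : Obj C.

Definition is_iso X Y (u : Mor X Y) : Prop :=
  exists v : Mor Y X, mcomp v u = idm X /\ mcomp u v = idm Y.

Definition isomorphic X Y : Prop := exists u : Mor X Y, is_iso u.

Definition is_zero_obj Z : Prop := idm Z = 0.

Definition is_biprod X Y P (i1 : Mor X P) (i2 : Mor Y P)
  (p1 : Mor P X) (p2 : Mor P Y) : Prop :=
  [/\ mcomp p1 i1 = idm X, mcomp p2 i2 = idm Y, mcomp p1 i2 = 0, mcomp p2 i1 = 0
    & mcomp i1 p1 + mcomp i2 p2 = idm P].
End Basic.

Record is_triangulated (C : cat_data) : Prop := {
  compA : forall (X Y Z W : Obj C) (h : Mor Z W) (g : Mor Y Z) (f : Mor X Y),
      mcomp h (mcomp g f) = mcomp (mcomp h g) f;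
  comp1m : forall (X Y : Obj C) (f : Mor X Y), mcomp (idm Y) f = f;
  compm1 : forall (X Y : Obj C) (f : Mor X Y), mcomp f (idm X) = f;
  compDl : forall (X Y Z : Obj C) (g1 g2 : Mor Y Z) (f : Mor X Y),
      mcomp (g1 + g2) f = mcomp g1 f + mcomp g2 f;
  compDr : forall (X Y Z : Obj C) (g : Mor Y Z) (f1 f2 : Mor X Y),
      mcomp g (f1 + f2) = mcomp g f1 + mcomp g f2;
  zero_obj_ex : exists Z : Obj C, is_zero_obj Z;
  biprod_ex : forall X Y : Obj C, exists (P : Obj C) (i1 : Mor X P) (i2 : Mor Y P)
      (p1 : Mor P X) (p2 : Mor P Y), is_biprod i1 i2 p1 p2;
  shmD : forall (X Y : Obj C) (f g : Mor X Y), shm (f + g) = shm f + shm g;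
  shm1 : forall X : Obj C, shm (idm X) = idm (sh X);
  shmM : forall (X Y Z : Obj C) (g : Mor Y Z) (f : Mor X Y),
      shm (mcomp g f) = mcomp (shm g) (shm f);
  shm_faithful : forall (X Y : Obj C) (f g : Mor X Y), shm f = shm g -> f = g;
  shm_full : forall (X Y : Obj C) (g : Mor (sh X) (sh Y)), exists f, shm f = g;
  sh_esurj : forall Y : Obj C, exists X : Obj C, isomorphic (sh X) Y;
  TR1_iso : forall (X Y Z X' Y' Z' : Obj C)
      (f : Mor X Y) (g : Mor Y Z) (h : Mor Z (sh X))
      (f' : Mor X' Y') (g' : Mor Y' Z') (h' : Mor Z' (sh X'))
      (a : Mor X X') (b : Mor Y Y') (c : Mor Z Z'),
      is_iso a -> is_iso b -> is_iso c ->
      mcomp b f = mcomp f' a -> mcomp c g = mcomp g' b -> mcomp (shm a) h = mcomp h' c ->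
      dist f g h -> dist f' g' h';
  TR1_id : forall (X Z : Obj C), is_zero_obj Z ->
      dist (idm X) (0 : Mor X Z) (0 : Mor Z (sh X));
  TR1_ext : forall (X Y : Obj C) (f : Mor X Y),
      exists (Z : Obj C) (g : Mor Y Z) (h : Mor Z (sh X)), dist f g h;
  TR2 : forall (X Y Z : Obj C) (f : Mor X Y) (g : Mor Y Z) (h : Mor Z (sh X)),
      dist f g h <-> dist g h (- shm f);
  TR3 : forall (X Y Z X' Y' Z' : Obj C)
      (f : Mor X Y) (g : Mor Y Z) (h : Mor Z (sh X))
      (f' : Mor X' Y') (g' : Mor Y' Z') (h' : Mor Z' (sh X'))
      (a : Mor X X') (b : Mor Y Y'),
      dist f g h -> dist f' g' h' -> mcomp b f = mcomp f' a ->
      exists c : Mor Z Z', mcomp c g = mcomp g' b /\ mcomp (shm a) h = mcomp h' c;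
  TR4 : forall (X Y Z Z' X' Y' : Obj C) (f : Mor X Y) (g : Mor Y Z)
      (f1 : Mor Y Z') (f2 : Mor Z' (sh X))
      (g1 : Mor Z X') (g2 : Mor X' (sh Y))
      (h1 : Mor Z Y') (h2 : Mor Y' (sh X)),
      dist f f1 f2 -> dist g g1 g2 -> dist (mcomp g f) h1 h2 ->
      exists (u : Mor Z' Y') (v : Mor Y' X'),
        [/\ dist u v (mcomp (shm f1) g2),
            mcomp u f1 = mcomp h1 g, mcomp h2 u = f2,
            mcomp v h1 = g1 & mcomp g2 v = mcomp (shm f) h2]
}.

Section Paper.
Variable C : cat_data.
Implicit Types X Y Z : Obj C.
Implicit Types P M N : Obj C -> Prop.

Definition subcategory P : Prop :=
  [/\ (forall X Y, isomorphic X Y -> P X -> P Y),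
      (forall Z, is_zero_obj Z -> P Z),
      (forall X Y Q (i1 : Mor X Q) (i2 : Mor Y Q) (p1 : Mor Q X) (p2 : Mor Q Y),
          is_biprod i1 i2 p1 p2 -> P X -> P Y -> P Q)
    & (forall X Y Q (i1 : Mor X Q) (i2 : Mor Y Q) (p1 : Mor Q X) (p2 : Mor Q Y),
          is_biprod i1 i2 p1 p2 -> P Q -> P X)].

Definition shiftP P : Obj C -> Prop :=
  fun X => exists X0, P X0 /\ isomorphic X (sh X0).
Definition unshiftP P : Obj C -> Prop := fun X => P (sh X).

Definition interP P N : Obj C -> Prop := fun X => P X /\ N X.

Definition Ext1_vanish M N : Prop :=
  forall X Y, M X -> N Y -> forall h : Mor X (sh Y), h = 0.

Definition starP M N : Obj C -> Prop :=
  fun X => exists (X1 X2 : Obj C) (m : Mor X1 X) (n : Mor X X2) (k : Mor X2 (sh X1)),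
    [/\ M X1, N X2 & dist m n k].

Definition cotorsion_pair U V : Prop :=
  [/\ subcategory U, subcategory V, Ext1_vanish U V
    & forall X, starP U (shiftP V) X].

Definition twin_cotorsion_pair S T U V : Prop :=
  [/\ cotorsion_pair S T, cotorsion_pair U V & Ext1_vanish S V].

Definition Wc T U := interP T U.
Definition Cminus S T U := starP (unshiftP S) (Wc T U).
Definition Cplus T U V := starP (Wc T U) (shiftP V).
Definition Heart S T U V := interP (Cplus T U V) (Cminus S T U).

Definition factors_through P X Y (f : Mor X Y) : Prop :=
  exists (W0 : Obj C) (a : Mor X W0) (b : Mor W0 Y), P W0 /\ f = mcomp b a.

(* underline f is an epimorphism in the ideal quotient  H / [W] *)
Definition quot_epi (H W : Obj C -> Prop) X Y (f : Mor X Y) : Prop :=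
  forall Z, H Z -> forall h1 h2 : Mor Y Z,
    factors_through W (mcomp h1 f - mcomp h2 f) -> factors_through W (h1 - h2).
End Paper.

(* Write the target Z of [k = h1 - h2] as an extension X1 -> Z -> X2 with X1 in W and X2 in V[1].
   Since Hom(U, V[1]) = 0 and [k f] factors through W ⊆ U, the composite B -> Z -> X2 kills f,
   so it factors through g; as g factors through U, it vanishes, hence k factors through
   the W-object X1. *)
From Pilot Require Import Defs.
From mathcomp Require Import all_boot all_algebra.
Set Implicit Arguments. Unset Strict Implicit.
Import GRing.Theory.
Local Open Scope ring_scope.

Section Triangulated.
Variable C : cat_data.
Hypothesis HC : is_triangulated C.

Lemma comp0m (X Y Z : Obj C) (f : Mor X Y) : mcomp (0 : Mor Y Z) f = 0.
Proof.
have := compDl HC (0 : Mor Y Z) 0 f; rewrite addr0 => /eqP.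
by rewrite -subr_eq subrr => /eqP <-.
Qed.

Lemma compm0 (X Y Z : Obj C) (g : Mor Y Z) : mcomp g (0 : Mor X Y) = 0.
Proof.
have := compDr HC g (0 : Mor X Y) 0; rewrite addr0 => /eqP.
by rewrite -subr_eq subrr => /eqP <-.
Qed.

Lemma compNm (X Y Z : Obj C) (g : Mor Y Z) (f : Mor X Y) :
  mcomp (- g) f = - mcomp g f.
Proof. by apply/eqP; rewrite -addr_eq0 -compDl // addNr comp0m. Qed.

Lemma compmN (X Y Z : Obj C) (g : Mor Y Z) (f : Mor X Y) :
  mcomp g (- f) = - mcomp g f.
Proof. by apply/eqP; rewrite -addr_eq0 -compDr // addNr compm0. Qed.

Lemma compBl (X Y Z : Obj C) (g1 g2 : Mor Y Z) (f : Mor X Y) :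
  mcomp (g1 - g2) f = mcomp g1 f - mcomp g2 f.
Proof. by rewrite compDl // compNm. Qed.

Lemma shm0 (X Y : Obj C) : shm (0 : Mor X Y) = 0.
Proof.
have := shmD HC (0 : Mor X Y) 0; rewrite addr0 => /eqP.
by rewrite -subr_eq subrr => /eqP <-.
Qed.

Lemma zero_obj_sh (Z : Obj C) : is_zero_obj Z -> is_zero_obj (sh Z).
Proof. by rewrite /is_zero_obj -shm1 // => ->; rewrite shm0. Qed.

(* Both lemmas compare the given triangle, via TR3, with a trivial triangle on W. *)
Lemma dist_weak_cokernel (X Y Z W : Obj C) (f : Mor X Y) (g : Mor Y Z)
    (h : Mor Z (sh X)) (u : Mor Y W) :
  dist f g h -> mcomp u f = 0 -> exists v : Mor Z W, u = mcomp v g.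
Proof.
move=> dfgh uf0.
have [O O0] := zero_obj_ex HC.
have dW : dist (0 : Mor O W) (idm W) (0 : Mor W (sh O)).
  by apply/(TR2 HC); rewrite shm0 oppr0; exact: TR1_id HC _ _ (zero_obj_sh O0).
have sq : mcomp u f = mcomp (0 : Mor O W) (0 : Mor X O) by rewrite uf0 compm0.
have [v [vg _]] := TR3 HC dfgh dW sq.
by exists v; rewrite vg comp1m.
Qed.

Lemma dist_weak_kernel (X Y Z W : Obj C) (f : Mor X Y) (g : Mor Y Z)
    (h : Mor Z (sh X)) (k : Mor W Y) :
  dist f g h -> mcomp g k = 0 -> exists v : Mor W X, k = mcomp f v.
Proof.
move=> dfgh gk0.
have [O O0] := zero_obj_ex HC.
have dW : dist (0 : Mor W O) (0 : Mor O (sh W)) (- shm (idm W)).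
  exact: (proj1 (TR2 HC _ _ _) (TR1_id HC W O0)).
have sq : mcomp (0 : Mor O Z) (0 : Mor W O) = mcomp g k by rewrite gk0 compm0.
have [s [_ hs]] := TR3 HC dW (proj1 (TR2 HC f g h) dfgh) sq.
have [v vs] := shm_full HC s.
exists v; apply: (shm_faithful HC); apply: oppr_inj.
by rewrite shmM // -compNm vs -hs shm1 // compmN compm1.
Qed.

Lemma Ext1_vanish_shiftP (U V : Obj C -> Prop) (Y X : Obj C) (q : Mor Y X) :
  Ext1_vanish U V -> U Y -> shiftP V X -> q = 0.
Proof.
move=> UV0 UY [X0 [VX0 [u [v [vu _]]]]].
rewrite -(comp1m HC q) -vu -(Defs.compA HC) (UV0 _ _ UY VX0 (mcomp u q)).
exact: compm0.
Qed.

Lemma factors_through_comp_eq0 (P : Obj C -> Prop) (X Y Z : Obj C)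
    (p : Mor X Y) (q : Mor Y Z) :
  (forall (W : Obj C) (r : Mor W Z), P W -> r = 0) ->
  factors_through P p -> mcomp q p = 0.
Proof.
move=> PZ0 [W [a [b [PW ->]]]].
by rewrite (Defs.compA HC) (PZ0 _ (mcomp q b) PW) comp0m.
Qed.

Lemma factors_through_starP_shiftP (M U V : Obj C -> Prop) (A B D Z : Obj C)
    (f : Mor A B) (g : Mor B D) (h : Mor D (sh A)) (k : Mor B Z) :
  Ext1_vanish U V -> dist f g h -> factors_through U g ->
  starP M (shiftP V) Z -> factors_through U (mcomp k f) -> factors_through M k.
Proof.
move=> UV0 dfgh Ug [X1 [X2 [m [n [e [MX1 VX2 dmne]]]]]] Ukf.
have UX2_0 (W : Obj C) (r : Mor W X2) : U W -> r = 0.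
  by move=> UW; apply: Ext1_vanish_shiftP UV0 UW VX2.
have [v nk] : exists v : Mor D X2, mcomp n k = mcomp v g.
  apply: dist_weak_cokernel dfgh _.
  by rewrite -(Defs.compA HC) (factors_through_comp_eq0 _ UX2_0).
have [k' ->] : exists k' : Mor B X1, k = mcomp m k'.
  by apply: dist_weak_kernel dmne _; rewrite nk (factors_through_comp_eq0 _ UX2_0).
by exists X1, k', m.
Qed.

End Triangulated.

Theorem corollary4p6 (C : cat_data) (HC : is_triangulated C)
  (S T U V : Obj C -> Prop) (tw : twin_cotorsion_pair S T U V)
  (A B Cc : Obj C) (hA : Heart S T U V A) (hB : Heart S T U V B)
  (f : Mor A B) (g : Mor B Cc) (h : Mor Cc (sh A)) (hd : dist f g h)
  (hg : exists (U0 : Obj C) (b : Mor B U0) (c : Mor U0 Cc), U U0 /\ g = mcomp c b) :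
  quot_epi (Heart S T U V) (Wc T U) f.
Proof.
case: tw => _ [_ _ UV0 _] _.
move=> Z [CplusZ _] h1 h2; rewrite -compBl //.
move=> [W [a [b [[_ UW] kf]]]].
apply: (factors_through_starP_shiftP HC UV0 hd hg CplusZ).
by exists W, a, b.
Qed.
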